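(* Let $[n]=A\cup B$ with $A\cap B=\emptyset$, let $t_1,t_2\ge0$ be integers, let $r\ge1$, and let $\mathcal C$ be an $[n,k]$ linear code over a finite field such that: (1) for every nonempty $E\subseteq A$ with $|E|\le t_1$ there is $i\in E$ having a recovering set $R\subseteq A\setminus E$; (2) for every nonempty $E\subseteq A$ with $|E|\le t_1+t_2+1$ there is $i\in E$ having a recovering set $R\subseteq[n]\setminus E$; (3) for every nonempty $E\subseteq B$ with $|E|\le t_2$ there is $i\in E$ having a recovering set $R\subseteq B\setminus E$; (4) for every nonempty $E\subseteq B$ with $|E|\le t_1+t_2+1$ there is $i\in E$ having a recovering set $R\subseteq[n]\setminus E$; where all recovering sets mentioned have size at most $r$. Then $\mathcal C$ is an $(n,k,r,t)$-SLRC with $t=t_1+t_2+1$.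
   Context: For $i\in[n]$, a recovering set of $i$ is a set $R\subseteq[n]\setminus\{i\}$ such that there exist nonzero field elements $a_j$ ($j\in R$) with $x_i=\sum_{j\in R}a_jx_j$ for all codewords $x\in\mathcal C$. $\mathcal C$ is an $(n,k,r,t)$-SLRC if for every $E\subseteq[n]$ with $|E|\le t$, $E$ can be indexed as $\{i_1,\dots,i_{|E|}\}$ such that each $i_\ell$ has a recovering set $R_\ell\subseteq([n]\setminus E)\cup\{i_1,\dots,i_{\ell-1}\}$ with $|R_\ell|\le r$. *)

From HB Require Import structures.
From mathcomp Require Import all_boot all_algebra.
Set Implicit Arguments. Unset Strict Implicit. Unset Printing Implicit Defensive.
Import GRing.Theory.
Local Open Scope ring_scope.

(* A linear code of length n over F is a subspace C of row vectors 'rV[F]_n;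
   coordinate i of a codeword x is x 0 i. *)

Definition recovering_set (F : fieldType) (n : nat) (C : {vspace 'rV[F]_n})
    (i : 'I_n) (R : {set 'I_n}) : Prop :=
  i \notin R /\
  exists a : 'I_n -> F,
    (forall j, j \in R -> a j != 0) /\
    (forall x : 'rV[F]_n, x \in C -> x 0 i = \sum_(j in R) a j * x 0 j).

Definition is_SLRC (F : fieldType) (n k r t : nat) (C : {vspace 'rV[F]_n}) : Prop :=
  \dim C = k /\
  forall E : {set 'I_n}, (#|E| <= t)%N ->
    exists s : seq 'I_n,
      [/\ uniq s, [set x in s] = E &
        forall (s1 s2 : seq 'I_n) (i : 'I_n), s = s1 ++ i :: s2 ->
          exists R : {set 'I_n},
            [/\ recovering_set C i R, (#|R| <= r)%N &
                R \subset (~: E) :|: [set x in s1]]].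

From HB Require Import structures.
From mathcomp Require Import all_boot all_algebra.
From mathcomp Require Import zify.
Local Open Scope nat_scope.

(* An erasure pattern E can be repaired sequentially as soon as every nonempty
   E' included in E has an element recoverable from outside E': repair that
   element first and recurse on the rest.  With [n] = A + B, a pattern E' of
   size at most t1 + t2 + 1 lying in a single part is handled by (2) or (4);
   otherwise #|E' :&: A| <= t1 or #|E' :&: B| <= t2 by pigeonhole, and (1) or
   (3) yields a recovering set inside that part, hence disjoint from E'. *)

Section RecoveryOrder.
Variables (F : fieldType) (n : nat) (C : {vspace 'rV[F]_n}) (r : nat).

Definition recoverable_outside (E : {set 'I_n}) (i : 'I_n) : Prop :=
  exists R : {set 'I_n},
    [/\ recovering_set C i R, #|R| <= r & R \subset ~: E].

Definition recovery_order (E : {set 'I_n}) (s : seq 'I_n) : Prop :=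
  [/\ uniq s, [set x in s] = E &
    forall (s1 s2 : seq 'I_n) (i : 'I_n), s = s1 ++ i :: s2 ->
      exists R : {set 'I_n},
        [/\ recovering_set C i R, #|R| <= r &
            R \subset (~: E) :|: [set x in s1]]].

Lemma recovery_order0 : recovery_order set0 [::].
Proof. by split; [| rewrite set_nil | case]. Qed.

Lemma recovery_order_cons (E : {set 'I_n}) (i : 'I_n) (s : seq 'I_n) :
  i \in E -> recoverable_outside E i -> recovery_order (E :\ i) s ->
  recovery_order E (i :: s).
Proof.
move=> iE [R [Rrec Rr RE]] [us setS orderS].
have iNs : i \notin s by rewrite -[i \in s]in_set setS setD11.
split.
- by rewrite /= iNs us.
- by rewrite set_cons setS setD1K.
- case=> [|j s1] s2 i0 /= [<-].
    by move=> _; exists R; split=> //; apply: subset_trans RE (subsetUl _ _).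
  move=> /orderS [R' [R'rec R'r R'E]]; exists R'; split=> //.
  by rewrite set_cons setUA -setCD.
Qed.

Lemma exists_recovery_order (E : {set 'I_n}) :
  (forall E' : {set 'I_n}, E' \subset E -> E' != set0 ->
     exists2 i, i \in E' & recoverable_outside E' i) ->
  exists s, recovery_order E s.
Proof.
have [m] := ubnP #|E|; elim: m E => // m IH E ltEm recE.
have [->|E0] := eqVneq E set0; first by exists [::]; apply: recovery_order0.
have [i iE recEi] := recE E (subxx E) E0.
have [s orderS] : exists s, recovery_order (E :\ i) s.
  apply: IH => [|E' sE'].
  - by move: ltEm; rewrite (cardsD1 i E) iE add1n ltnS.
  - by apply: recE; apply: subset_trans sE' (subsetDl _ _).
by exists (i :: s); apply: recovery_order_cons.
Qed.

Definition local_recovery (D : {set 'I_n}) (t : nat) : Prop :=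
  forall E : {set 'I_n}, E != set0 -> E \subset D -> #|E| <= t ->
    exists2 i, i \in E & exists R : {set 'I_n},
      [/\ recovering_set C i R, #|R| <= r & R \subset D :\: E].

Definition global_recovery (D : {set 'I_n}) (t : nat) : Prop :=
  forall E : {set 'I_n}, E != set0 -> E \subset D -> #|E| <= t ->
    exists2 i, i \in E & recoverable_outside E i.

Lemma recoverable_outside_local (D E : {set 'I_n}) (t : nat) :
  local_recovery D t -> E :&: D != set0 -> #|E :&: D| <= t ->
  exists2 i, i \in E & recoverable_outside E i.
Proof.
move=> locD ED0 EDt.
have [i iED [R [Rrec Rr RD]]] := locD _ ED0 (subsetIr _ _) EDt.
exists i; first by move: iED; rewrite inE => /andP[].
exists R; split=> //; apply: subset_trans RD _.
by rewrite setDIr setDv setU0 setDE subsetIr.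
Qed.

Lemma recoverable_outside_split (A E : {set 'I_n}) (t1 t2 : nat) :
  local_recovery A t1 -> global_recovery A (t1 + t2 + 1) ->
  local_recovery (~: A) t2 -> global_recovery (~: A) (t1 + t2 + 1) ->
  E != set0 -> #|E| <= t1 + t2 + 1 ->
  exists2 i, i \in E & recoverable_outside E i.
Proof.
move=> locA globA locB globB E0 Et.
have [EA|] := boolP (E \subset A); first exact: globA.
rewrite -setD_eq0 setDE => EB0.
have [EB|] := boolP (E \subset ~: A); first exact: globB.
rewrite -disjoints_subset -setI_eq0 => EA0.
have := cardsID A E; rewrite setDE => cardE.
have [leA|gtA] := leqP #|E :&: A| t1.
  exact: recoverable_outside_local locA EA0 leA.
by apply: recoverable_outside_local locB EB0 _; lia.
Qed.

End RecoveryOrder.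

Theorem lemma2 (F : finFieldType) (n k : nat) (C : {vspace 'rV[F]_n})
    (A B : {set 'I_n}) (t1 t2 r : nat) :
  A :&: B = set0 -> A :|: B = [set: 'I_n] ->
  (1 <= r)%N ->
  \dim C = k ->
  (forall E : {set 'I_n}, E != set0 -> E \subset A -> (#|E| <= t1)%N ->
     exists2 i, i \in E & exists R : {set 'I_n},
       [/\ recovering_set C i R, (#|R| <= r)%N & R \subset A :\: E]) ->
  (forall E : {set 'I_n}, E != set0 -> E \subset A -> (#|E| <= t1 + t2 + 1)%N ->
     exists2 i, i \in E & exists R : {set 'I_n},
       [/\ recovering_set C i R, (#|R| <= r)%N & R \subset ~: E]) ->
  (forall E : {set 'I_n}, E != set0 -> E \subset B -> (#|E| <= t2)%N ->
     exists2 i, i \in E & exists R : {set 'I_n},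
       [/\ recovering_set C i R, (#|R| <= r)%N & R \subset B :\: E]) ->
  (forall E : {set 'I_n}, E != set0 -> E \subset B -> (#|E| <= t1 + t2 + 1)%N ->
     exists2 i, i \in E & exists R : {set 'I_n},
       [/\ recovering_set C i R, (#|R| <= r)%N & R \subset ~: E]) ->
  is_SLRC k r (t1 + t2 + 1)%N C.
Proof.
move=> AB0 ABT _ dimC locA globA locB globB; split=> // E Et.
have defB : B = ~: A.
  apply/setP=> x; move/setP/(_ x): ABT; move/setP/(_ x): AB0; rewrite !inE.
  by case: (x \in A); case: (x \in B).
subst B; apply: exists_recovery_order => E' sE' E'0.
apply: recoverable_outside_split locA globA locB globB E'0 _.
exact: leq_trans (subset_leq_card sE') Et.
Qed.
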